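(* Let $q=p^f$ with $p$ prime, $n\ge2$ and $(n,q)\notin\{(2,2),(2,3)\}$. Let $\beta$ be a basis of $V=\mathbb{F}_q^n$ and $\phi=\phi_\beta$. Let $H\le\Gamma\mathrm{L}_n(q)$ with $H\cap\mathrm{GL}_n(q)\le Z(\mathrm{GL}_n(q))$. Then there exists $b\in\mathrm{GL}_n(q)$ such that every element of $H^b$ has the form $\phi^i g$ for some $i\in\{1,\dots,f\}$ and some $g\in Z(\mathrm{GL}_n(q))$.
   Context: $\Gamma\mathrm{L}_n(q)$ is the group of invertible $\mathbb{F}_q$-semilinear transformations of $V$. For $\beta=\{v_1,\dots,v_n\}$, $\phi_\beta$ is the semilinear map $\sum_i\lambda_iv_i\mapsto\sum_i\lambda_i^p v_i$, so $\Gamma\mathrm{L}_n(q)=\mathrm{GL}_n(q)\rtimes\langle\phi_\beta\rangle$. $Z(\mathrm{GL}_n(q))$ is the group of scalar matrices; $H^b=b^{-1}Hb$. *)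

From HB Require Import structures.
From mathcomp Require Import all_boot all_order all_algebra all_fingroup.
Set Implicit Arguments. Unset Strict Implicit. Unset Printing Implicit Defensive.
Import GRing.Theory.
Local Open Scope ring_scope.

(* V = F^n is modelled as row vectors 'rV[F]_n; elements of GammaL_n(q) are
   permutations of V (invertible maps) that are semilinear. *)

(* g is F-semilinear: additive and twisted by some field automorphism sigma
   (a ring endomorphism of a finite field is an automorphism). *)
Definition semilinear_map (F : fieldType) (n : nat) (g : 'rV[F]_n -> 'rV[F]_n) : Prop :=
  exists sigma : {rmorphism F -> F},
    forall (a : F) (u v : 'rV[F]_n), g (a *: u + v) = sigma a *: g u + g v.

Definition linear_map (F : fieldType) (n : nat) (g : 'rV[F]_n -> 'rV[F]_n) : Prop :=
  forall (a : F) (u v : 'rV[F]_n), g (a *: u + v) = a *: g u + g v.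

Definition scalar_map (F : fieldType) (n : nat) (g : 'rV[F]_n -> 'rV[F]_n) : Prop :=
  exists2 lam : F, lam != 0 & forall v, g v = lam *: v.

(* phi_beta for the basis beta whose vectors are the rows of the invertible
   matrix B: sum_i lam_i v_i |-> sum_i lam_i^p v_i.  Coordinates of v in beta
   are v *m invmx B. *)
Definition phi_beta (F : fieldType) (n : nat) (B : 'M[F]_n) (p : nat)
  (v : 'rV[F]_n) : 'rV[F]_n :=
  map_mx (fun x : F => x ^+ p) (v *m invmx B) *m B.

(** Every semilinear map is [p ^ k]-semilinear for some [k], its twist, defined
    modulo [f].  Since [H] meets [GL_n(q)] only in scalars, the twists of [H] are
    the multiples of the least positive one [k0], which divides [f]; for [h0] of
    twist [k0] every element of [H] is a scalar multiple of a power of [h0], and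
    [h0 ^+ (f / k0)] is a scalar [mu] fixed by [x |-> x ^+ (p ^ k0)].  Since the
    norm onto that fixed field is surjective, [T = lam *: h0] has [T ^+ (f / k0) = 1]
    for a suitable [lam].  By Galois descent the [T]-fixed vectors span [V]: a
    functional killing them but not [v] turns [c |-> \sum_i T ^+ i (c *: v)] into a
    nonzero [p ^ k0]-polynomial of degree [< q] vanishing on [F].  A basis of fixed
    vectors conjugates [T] to [phi ^+ k0], hence [H] into scalars times powers of
    [phi]. *)

From mathcomp Require Import all_boot all_order all_algebra all_fingroup cyclic finfield.
From Stdlib Require Import Classical Wf_nat.
Set Implicit Arguments. Unset Strict Implicit. Unset Printing Implicit Defensive.
Import GRing.Theory.
Local Open Scope ring_scope.

Section FiniteField.
Variable F : finFieldType.

Lemma expf_card_pred (x : F) : x != 0 -> x ^+ #|F|.-1 = 1.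
Proof.
move=> nz; apply: (mulfI nz); rewrite mulr1 -exprS prednK ?expf_card //.
exact: ltnW (finNzRing_gt1 F).
Qed.

Lemma finField_prim_root : exists a : F, (#|F|.-1).-primitive_root a.
Proof.
have q1_gt0 : (0 < #|F|.-1)%N by rewrite -subn1 subn_gt0 finNzRing_gt1.
have units_unity : all (#|F|.-1).-unity_root (enum (predC1 (0 : F))).
  by apply/allP => x; rewrite mem_enum unity_rootE => /expf_card_pred ->.
have sz_units : (#|F|.-1 <= size (enum (predC1 (0 : F)%R)))%N.
  by rewrite -cardE cardC1.
have /hasP [a _ a_pr] := has_prim_root q1_gt0 units_unity (enum_uniq _) sz_units.
by exists a.
Qed.

Lemma unity_root_expf_onto (d e : nat) (x : F) :
  (d * e)%N = #|F|.-1 -> x ^+ e = 1 -> exists2 y : F, y != 0 & y ^+ d = x.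
Proof.
move=> de_q xe1; have [a a_pr] := finField_prim_root.
have e_gt0 : (0 < e)%N.
  rewrite lt0n; apply/eqP => e0; move: de_q; rewrite e0 muln0 => /esym/eqP.
  by rewrite -subn1 subn_eq0 leqNgt finNzRing_gt1.
have x_nz : x != 0.
  by apply: contra_eq_neq xe1 => ->; rewrite expr0n gtn_eqF // eq_sym oner_eq0.
have [[t _] /= x_eq] := prim_rootP a_pr (expf_card_pred x_nz).
have : (#|F|.-1 %| t * e)%N by rewrite (prim_order_dvd a_pr) exprM -x_eq xe1.
rewrite x_eq -de_q dvdn_pmul2r // => /divnK <-.
exists (a ^+ (t %/ d)); last by rewrite -exprM.
rewrite expf_neq0 //; apply/eqP => a0; move: (prim_expr_order a_pr).
by rewrite a0 expr0n gtn_eqF ?(prim_order_gt0 a_pr) // => /esym/eqP; rewrite oner_eq0.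
Qed.

Section Frobenius.
Variables (p f : nat).
Hypotheses (p_pr : prime p) (cardF : #|F| = (p ^ f)%N).

Lemma pchar_finField : p \in [pchar F].
Proof. exact: card_finPcharP cardF p_pr. Qed.

Lemma card_exp_gt0 : (0 < f)%N.
Proof. by move: (finNzRing_gt1 F); rewrite cardF; case: f. Qed.

Lemma expr_pexp_f (x : F) : x ^+ (p ^ f) = x.
Proof. by rewrite -cardF expf_card. Qed.

Lemma expr_pexpDMf k a (x : F) : x ^+ (p ^ (k + a * f)) = x ^+ (p ^ k).
Proof.
elim: a => [|a IHa]; first by rewrite addn0.
by rewrite mulSn addnCA expnD exprM expr_pexp_f.
Qed.

Lemma exprD_pexp k (x y : F) : (x + y) ^+ (p ^ k) = x ^+ (p ^ k) + y ^+ (p ^ k).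
Proof. by rewrite exprDn_pchar // pnatX pnatE // pchar_finField. Qed.

Lemma pFrobenius_fixed_nat (c : F) : c ^+ p = c -> exists k : nat, c = k%:R.
Proof.
move=> c_fixed; case: (boolP (c \in [seq (k%:R : F) | k <- iota 0 p])).
  by case/mapP => k _ ->; exists k.
move=> c_notin; exfalso.
pose Q : {poly F} := 'X^p - 'X.
have szQ : size Q = p.+1.
  by rewrite size_polyDl size_polyXn // size_polyN size_polyX ltnS prime_gt1.
have rootQ x : x ^+ p = x -> root Q x by move=> xp; rewrite /root !hornerE xp subrr.
have natr_inj : {in iota 0 p &, injective (fun k => k%:R : F)}.
  move=> k l; rewrite !mem_iota !add0n /= => kp lp.
  wlog lk : k l kp lp / (l <= k)%N => [W|].
    have [lk|/ltnW kl] := leqP l k; first exact: W.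
    by move/esym/(W l k lp kp kl).
  move/eqP; rewrite -subr_eq0 -natrB // -(dvdn_pcharf pchar_finField) /dvdn.
  rewrite modn_small ?(leq_ltn_trans (leq_subr _ _)) // subn_eq0 => kl.
  by apply/eqP; rewrite eqn_leq kl.
have roots : all (root Q) (c :: [seq k%:R | k <- iota 0 p]).
  rewrite /= rootQ //; apply/allP => _ /mapP [k _ ->].
  by apply: rootQ; rewrite -(pFrobenius_autE pchar_finField) rmorph_nat.
have uniq_roots : uniq (c :: [seq (k%:R : F) | k <- iota 0 p]).
  by rewrite /= c_notin map_inj_in_uniq ?iota_uniq.
have := roots_geq_poly_eq0 roots uniq_roots.
by rewrite szQ /= size_map size_iota leqnn => /(_ isT)/eqP; rewrite -size_poly_eq0 szQ.
Qed.

Lemma rmorph_pexp (s : {rmorphism F -> F}) :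
  exists2 i, (i < f)%N & forall x, s x = x ^+ (p ^ i).
Proof.
have [a a_pr] := finField_prim_root.
have pF := pchar_finField.
pose P : {poly F} := \prod_(0 <= i < f) ('X - (a ^+ (p ^ i))%:P).
have frobP : map_poly (pFrobenius_aut pF) P = P.
  rewrite /P rmorph_prod /=.
  under eq_bigr do rewrite map_polyXsubC /= pFrobenius_autE -exprM -expnSr.
  have := expr_pexp_f a; case: f card_exp_gt0 => // f' _ af.
  by rewrite big_nat_recr //= big_nat_recl //= af expn0 expr1 mulrC.
have sP : map_poly s P = P.
  apply/polyP => j; rewrite coef_map /=.
  have /pFrobenius_fixed_nat [k ->] : P`_j ^+ p = P`_j.
    by rewrite -(pFrobenius_autE pF) -coef_map frobP.
  exact: rmorph_nat.
have : root P (s a).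
  rewrite -sP rootE horner_map /= /P horner_prod.
  case: f card_exp_gt0 => // f' _.
  by rewrite big_nat_recl //= !hornerE expn0 expr1 subrr mul0r rmorph0.
rewrite /root /P horner_prod prodf_seq_eq0 => /hasP [i].
rewrite mem_iota add0n subn0 => /= i_lt_f; rewrite !hornerE subr_eq0 => /eqP sa.
exists i => // x; have [->|x_nz] := eqVneq x 0.
  by rewrite rmorph0 expr0n expn_eq0 eqn0Ngt prime_gt0.
have [[j _] /= ->] := prim_rootP a_pr (expf_card_pred x_nz).
by rewrite rmorphXn sa -!exprM mulnC.
Qed.

Lemma pexp_poly_coef_eq0 (k m : nat) (b : 'I_m -> F) :
  (0 < k)%N -> (k * m <= f)%N ->
  (forall c : F, \sum_(i < m) b i * c ^+ (p ^ (k * i)) = 0) -> forall i, b i = 0.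
Proof.
move=> k_gt0 km_le_f vanish i.
have p_gt1 := prime_gt1 p_pr.
pose P : {poly F} := \sum_(j < m) b j *: 'X^(p ^ (k * j)).
have coefP : P`_(p ^ (k * i)) = b i.
  rewrite /P coef_sum (bigD1 i) //= coefZ coefXn eqxx mulr1 big1 ?addr0 // => j ji.
  rewrite coefZ coefXn eqn_exp2l // eqn_pmul2l //.
  by rewrite eq_sym (negbTE (ji : j != i :> nat)) mulr0.
have szP : (size P <= #|F|)%N.
  rewrite cardF; apply: (big_ind (fun Q : {poly F} => size Q <= p ^ f)%N).
  - by rewrite size_poly0.
  - by move=> Q1 Q2 h1 h2; rewrite (leq_trans (size_polyD _ _)) // geq_max h1 h2.
  move=> j _; rewrite (leq_trans (size_scale_leq _ _)) // size_polyXn ltn_exp2l //.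
  by rewrite (leq_trans _ km_le_f) // ltn_pmul2l.
have rootsP : all (root P) (enum F).
  apply/allP => c _; rewrite /root /P horner_sum; apply/eqP; rewrite -[RHS](vanish c).
  by apply: eq_bigr => j _; rewrite hornerZ hornerXn.
by rewrite -coefP (roots_geq_poly_eq0 rootsP (enum_uniq _)) ?coef0 // -cardE.
Qed.

End Frobenius.
End FiniteField.

Section FrobeniusSemilinear.
Variables (F : finFieldType) (p f n : nat).
Hypotheses (p_pr : prime p) (cardF : #|F| = (p ^ f)%N).
Implicit Types (g h : 'rV[F]_n -> 'rV[F]_n) (k l : nat).

Definition frob_semilinear k g :=
  forall (a : F) (u v : 'rV[F]_n), g (a *: u + v) = a ^+ (p ^ k) *: g u + g v.

Lemma frob_semilinearD k g : frob_semilinear k g -> {morph g : u v / u + v}.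
Proof. by move=> gS u v; rewrite -{1}(scale1r u) gS expr1n scale1r. Qed.

Lemma frob_semilinear0 k g : frob_semilinear k g -> g 0 = 0.
Proof. by move=> gS; apply: (addrI (g 0)); rewrite -(frob_semilinearD gS) !addr0. Qed.

Lemma frob_semilinearZ k g : frob_semilinear k g ->
  forall a u, g (a *: u) = a ^+ (p ^ k) *: g u.
Proof. by move=> gS a u; rewrite -[a *: u]addr0 gS (frob_semilinear0 gS) addr0. Qed.

Lemma frob_semilinear_sum k g : frob_semilinear k g ->
  forall (I : Type) (r : seq I) (P : pred I) (E : I -> 'rV[F]_n),
  g (\sum_(i <- r | P i) E i) = \sum_(i <- r | P i) g (E i).
Proof.
by move=> gS I r P E; apply: (big_morph g (frob_semilinearD gS) (frob_semilinear0 gS)).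
Qed.

Lemma frob_semilinear_comp k l g h : frob_semilinear k g -> frob_semilinear l h ->
  frob_semilinear (l + k) (fun v => g (h v)).
Proof. by move=> gS hS a u v; rewrite hS gS expnD exprM. Qed.

Lemma frob_semilinear_iter k g : frob_semilinear k g ->
  forall j, frob_semilinear (k * j) (iter j g).
Proof.
move=> gS; elim=> [|j IHj] a u v /=; first by rewrite muln0 expn0 expr1.
by rewrite (frob_semilinear_comp gS IHj) mulnS addnC.
Qed.

Lemma frob_semilinear_scale k g (c : F) : frob_semilinear k g ->
  frob_semilinear k (fun v => c *: g v).
Proof. by move=> gS a u v; rewrite gS scalerDr !scalerA mulrC. Qed.

Lemma iter_frob_semilinear_scale k g (c : F) : frob_semilinear k g ->
  forall j v,
  iter j (fun v => c *: g v) v = c ^+ (\sum_(i < j) (p ^ k) ^ i)%N *: iter j g v.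
Proof.
move=> gS; elim=> [|j IHj] v /=; first by rewrite big_ord0 scale1r.
rewrite IHj (frob_semilinearZ gS) scalerA -exprM -exprS big_ord_recl expn0 add1n.
by rewrite big_distrl; congr (_ ^+ _.+1 *: _); apply: eq_bigr => i _; rewrite expnSr.
Qed.

Lemma frob_semilinearDMf k a g :
  frob_semilinear (k + a * f) g <-> frob_semilinear k g.
Proof. by split=> gS x u v; rewrite gS (expr_pexpDMf cardF). Qed.

Lemma frob_semilinearV k (s : {perm 'rV[F]_n}) : (k <= f)%N ->
  frob_semilinear k s -> frob_semilinear (f - k) (s^-1)%g.
Proof.
move=> k_le_f sS a u v; apply: (@perm_inj _ s); rewrite permKV sS !permKV.
by rewrite -exprM -expnD subnK // (expr_pexp_f cardF).
Qed.

Lemma frob_semilinear0_linear g : frob_semilinear 0 g <-> linear_map g.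
Proof. by split=> gS a u v; rewrite gS ?expn0 ?expr1. Qed.

Lemma semilinear_frob g : semilinear_map g -> exists k, frob_semilinear k g.
Proof.
case=> s gs; have [k _ sE] := rmorph_pexp p_pr cardF s.
by exists k => a u v; rewrite gs sE.
Qed.

End FrobeniusSemilinear.

Section PhiBeta.
Variables (F : finFieldType) (p f n : nat).
Hypotheses (p_pr : prime p) (cardF : #|F| = (p ^ f)%N).
Variable B : 'M[F]_n.
Hypothesis B_unit : B \in unitmx.

Local Notation phi := (phi_beta B p).

Lemma iter_phi_beta k v :
  iter k phi v = map_mx (fun x => x ^+ (p ^ k)) (v *m invmx B) *m B.
Proof.
elim: k => [|k IHk] /=.
  rewrite -{1}(mulmxKV B_unit v); congr (_ *m _).
  by apply/matrixP => i j; rewrite [RHS]mxE expn0 expr1.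
rewrite IHk /phi_beta mulmxK //; congr (_ *m _).
by apply/matrixP => i j; rewrite !mxE -exprM expnSr.
Qed.

Lemma frob_semilinear_iter_phi_beta k : frob_semilinear p k (iter k phi).
Proof.
move=> a u v; rewrite !iter_phi_beta scalemxAl -mulmxDl; congr (_ *m _).
by apply/matrixP => i j; rewrite mulmxDl -scalemxAl !mxE (exprD_pexp p_pr cardF) exprMn.
Qed.

Lemma iter_phi_beta_f v : iter f phi v = v.
Proof.
rewrite iter_phi_beta -[RHS](mulmxKV B_unit v); congr (_ *m _).
by apply/matrixP => i j; rewrite mxE (expr_pexp_f cardF).
Qed.

Definition scaled_phi_pow k (g : 'rV[F]_n -> 'rV[F]_n) :=
  exists2 c : F, c != 0 & forall v, g v = c *: iter k phi v.

Lemma scaled_phi_powZ k g (c : F) : c != 0 ->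
  scaled_phi_pow k g -> scaled_phi_pow k (fun v => c *: g v).
Proof.
move=> c_nz [d d_nz gE]; exists (c * d) => [|v]; first by rewrite mulf_neq0.
by rewrite gE scalerA.
Qed.

Lemma scaled_phi_pow_comp k l g h : scaled_phi_pow k g -> scaled_phi_pow l h ->
  scaled_phi_pow (k + l) (fun v => g (h v)).
Proof.
move=> [c c_nz gE] [d d_nz hE]; exists (c * d ^+ (p ^ k)) => [|v].
  by rewrite mulf_neq0 // expf_neq0.
by rewrite gE hE (frob_semilinearZ (frob_semilinear_iter_phi_beta k)) scalerA iterD.
Qed.

Lemma scaled_phi_pow_iter k g : scaled_phi_pow k g ->
  forall j, scaled_phi_pow (k * j) (iter j g).
Proof.
move=> gE; elim=> [|j IHj]; first by exists 1 => [|v]; rewrite ?oner_eq0 // muln0 scale1r.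
by rewrite mulnS; apply: scaled_phi_pow_comp gE IHj.
Qed.

Lemma scaled_phi_pow_reduce k g : scaled_phi_pow k g ->
  exists i, [/\ (1 <= i)%N, (i <= f)%N & scaled_phi_pow i g].
Proof.
have f_gt0 := card_exp_gt0 cardF.
case=> c c_nz gE; have [a [a_gt0 a_le_f phiE]] : exists a,
    [/\ (1 <= a)%N, (a <= f)%N & forall v, iter k phi v = iter a phi v].
  elim: k {gE} => [|k [a [a_gt0 a_le_f phiE]]].
    by exists f; split=> // v; rewrite iter_phi_beta_f.
  have [a_lt_f|a_ge_f] := ltnP a f; first by exists a.+1; split=> // v; rewrite iterS phiE.
  have a_eq_f : a = f by apply/eqP; rewrite eqn_leq a_le_f.
  by exists 1%N; split=> // v; rewrite iterS phiE a_eq_f iter_phi_beta_f.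
by exists a; split=> //; exists c => // v; rewrite gE phiE.
Qed.

End PhiBeta.

Section Descent.
Variables (F : finFieldType) (p f n : nat).
Hypotheses (p_pr : prime p) (cardF : #|F| = (p ^ f)%N).
Variables (T : 'rV[F]_n -> 'rV[F]_n) (k m : nat).
Hypotheses (k_gt0 : (0 < k)%N) (km_f : (k * m = f)%N).
Hypotheses (T_semilinear : frob_semilinear p k T) (T_order : forall v, iter m T v = v).

Let m_gt0 : (0 < m)%N.
Proof.
rewrite lt0n; apply: contra_eqN km_f => /eqP ->.
by rewrite muln0 eq_sym -lt0n (card_exp_gt0 cardF).
Qed.

Let trace v := \sum_(i < m) iter i T v.

Let fixed_trace v : T (trace v) = trace v.
Proof.
rewrite /trace (frob_semilinear_sum T_semilinear) -(prednK m_gt0).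
rewrite big_ord_recr big_ord_recl /= -iterS prednK // T_order addrC.
by congr (_ + _); apply: eq_bigr.
Qed.

Let fixed_vectors :=
  \matrix_(i < #|{: 'rV[F]_n}|) let u := enum_val i in if T u == u then u else 0.

Let fixed_vectors_row i : T (row i fixed_vectors) = row i fixed_vectors.
Proof.
by rewrite rowK /=; case: eqP => // _; rewrite (frob_semilinear0 T_semilinear).
Qed.

Let fixed_sub_fixed_vectors u : T u = u -> (u <= fixed_vectors)%MS.
Proof.
move=> Tu; have <- : row (enum_rank u) fixed_vectors = u.
  by rewrite rowK /= enum_rankK Tu eqxx.
exact: row_sub.
Qed.

Let fixed_vectors_full : row_full fixed_vectors.
Proof.
rewrite -sub1mx; apply/row_subP => r; move: (row r 1%:M) => v.
apply: contraT => v_notin; set K := cokermx fixed_vectors.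
have /existsP [j vKj] : [exists j, (v *m K) 0 j != 0].
  apply: contraR v_notin => /existsPn vK0; rewrite submxE; apply/eqP/rowP => j.
  by rewrite [RHS]mxE; apply/eqP/negPn/vK0.
pose b (i : 'I_m) := (iter i T v *m K) 0 j.
suff b_eq0 : forall i, b i = 0.
  by move: vKj; rewrite -[X in X != 0]/(b (Ordinal m_gt0)) b_eq0 eqxx.
apply: (pexp_poly_coef_eq0 p_pr cardF k_gt0 (eq_leq km_f)) => c.
have : (trace (c *: v) <= fixed_vectors)%MS by apply/fixed_sub_fixed_vectors/fixed_trace.
rewrite submxE => /eqP/rowP/(_ j); rewrite [RHS]mxE => trace_K.
rewrite -[RHS]trace_K mulmx_suml summxE; apply: eq_bigr => i _.
by rewrite (frob_semilinearZ (frob_semilinear_iter T_semilinear i)) -scalemxAl mxE mulrC.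
Qed.

Lemma frob_semilinear_fixed_basis : exists2 W : 'M[F]_n, W \in unitmx &
  forall c : 'rV_n, T (c *m W) = map_mx (fun x => x ^+ (p ^ k)) c *m W.
Proof.
exists (rowsub (fullrankfun fixed_vectors_full) fixed_vectors).
  exact: fullrowsub_unit.
move=> c; rewrite !mulmx_sum_row (frob_semilinear_sum T_semilinear).
apply: eq_bigr => i _.
by rewrite (frob_semilinearZ T_semilinear) row_rowsub fixed_vectors_row mxE.
Qed.

End Descent.

Section MulmxPerm.
Variables (F : finFieldType) (n : nat) (M : 'M[F]_n).
Hypothesis M_unit : M \in unitmx.

Definition mulmx_perm : {perm 'rV[F]_n} := perm (can_inj (mulmxK M_unit)).

Lemma mulmx_permE v : mulmx_perm v = v *m M.
Proof. by rewrite permE. Qed.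

Lemma linear_mulmx_perm : linear_map (fun v => mulmx_perm v).
Proof. by move=> a u v; rewrite !mulmx_permE mulmxDl scalemxAl. Qed.

End MulmxPerm.

Lemma linear_mapZ (F : fieldType) (n : nat) (g : 'rV[F]_n -> 'rV[F]_n) :
  linear_map g -> forall a u, g (a *: u) = a *: g u.
Proof.
move=> g_linear a u; have g0 : g 0 = 0.
  apply: (addrI (g 0)); rewrite addr0.
  by rewrite -{3}(addr0 0) -{3}(scale1r 0) g_linear scale1r.
by rewrite -[a *: u]addr0 g_linear g0 addr0.
Qed.

Lemma conjg_scaled_iter (F : finFieldType) (n : nat) (b g h : {perm 'rV[F]_n})
    (c : F) (a : nat) :
  linear_map (fun v => b v) -> (forall v, h v = c *: iter a g v) ->
  forall v, (h ^ b)%g v = c *: iter a (g ^ b)%g v.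
Proof.
move=> b_linear hE v; rewrite -permX -conjXg !conjgE !permM hE permX.
exact: linear_mapZ.
Qed.

Section SemilinearGroup.
Variables (F : finFieldType) (p f n : nat).
Hypotheses (p_pr : prime p) (cardF : #|F| = (p ^ f)%N) (n_gt0 : (0 < n)%N).
Variable H : {group {perm 'rV[F]_n}}.
Hypothesis H_semilinear : forall h, h \in H -> semilinear_map (fun v => h v).
Hypothesis H_scalar :
  forall h, h \in H -> linear_map (fun v => h v) -> scalar_map (fun v => h v).

Lemma frob_semilinear_perm1 : frob_semilinear p f (1%g : {perm 'rV[F]_n}).
Proof. by move=> a u v; rewrite !perm1 (expr_pexp_f cardF). Qed.

Lemma exists_least_twist : exists k0 (h0 : {perm 'rV[F]_n}),
  [/\ (0 < k0)%N, h0 \in H, frob_semilinear p k0 h0 &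
      forall k h, (0 < k < k0)%N -> h \in H -> ~ frob_semilinear p k h].
Proof.
pose P k := (0 < k)%N /\ exists2 h, h \in H & frob_semilinear p k h.
have [|k0 [[[k0_gt0 [h0 h0_in_H h0S]] k0_least] _]] :=
  dec_inh_nat_subset_has_unique_least_element P (fun k => classic (P k)).
  exists f; split; first exact: card_exp_gt0 cardF.
  by exists 1%g; [exact: group1 | exact: frob_semilinear_perm1].
exists k0, h0; split=> // k h /andP [k_gt0 k_lt_k0] h_in_H hS.
have /leP := k0_least k (conj k_gt0 (ex_intro2 _ _ h h_in_H hS)).
by rewrite leqNgt k_lt_k0.
Qed.

Section LeastTwist.
Variables (k0 : nat) (h0 : {perm 'rV[F]_n}).
Hypotheses (k0_gt0 : (0 < k0)%N) (h0_in_H : h0 \in H).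
Hypothesis h0_semilinear : frob_semilinear p k0 h0.
Hypothesis k0_least : forall k h, (0 < k < k0)%N -> h \in H -> ~ frob_semilinear p k h.

Lemma least_twist_le : (k0 <= f)%N.
Proof.
rewrite leqNgt; apply/negP => f_lt_k0.
by apply: (k0_least _ (group1 H) frob_semilinear_perm1); rewrite (card_exp_gt0 cardF).
Qed.

Lemma least_twist_decomposition k h : h \in H -> frob_semilinear p k h ->
  (k0 %| k)%N /\ exists2 c : F, c != 0 & forall v, h v = c *: iter (k %/ k0) h0 v.
Proof.
move=> h_in_H hS; set a := (k %/ k0)%N; set r := (k %% k0)%N.
pose g := ((h0^-1) ^+ a * h)%g.
have gE v : g v = h (iter a (h0^-1)%g v) by rewrite permM permX.
have gS : frob_semilinear p r g.
  have h0VS := frob_semilinearV cardF least_twist_le h0_semilinear.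
  apply/(frob_semilinearDMf cardF _ a) => x u v.
  have -> : (r + a * f = (f - k0) * a + k)%N.
    rewrite [in RHS](divn_eq k k0) -/a -/r mulnBl addnA [(a * k0)%N]mulnC.
    by rewrite subnK ?leq_mul2r ?least_twist_le ?orbT // addnC mulnC.
  by rewrite !gE; apply: frob_semilinear_comp hS (frob_semilinear_iter h0VS a) x u v.
have r0 : r = 0%N.
  apply/eqP; apply: contraT; rewrite -lt0n => r_gt0.
  by case: (k0_least (k := r) (h := g)); rewrite ?r_gt0 ?ltn_pmod // !in_group.
split; first by rewrite /dvdn -/r r0.
have [c c_nz gE'] : scalar_map (fun v => g v).
  apply: H_scalar; rewrite ?in_group //.
  by apply/frob_semilinear0_linear; move: gS; rewrite r0.
exists c => // v; have -> : h = (h0 ^+ a * g)%g by rewrite mulgA expVgn mulgV mul1g.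
by rewrite permM gE' permX.
Qed.

Local Notation m := (f %/ k0)%N.

Lemma least_twist_dvd : (k0 %| f)%N.
Proof. by case: (least_twist_decomposition (group1 H) frob_semilinear_perm1). Qed.

Let k0m : (k0 * m = f)%N.
Proof. by rewrite mulnC divnK // least_twist_dvd. Qed.

Lemma least_twist_power_scalar :
  exists mu : F, [/\ mu != 0, mu ^+ (p ^ k0) = mu & forall v, iter m h0 v = mu *: v].
Proof.
have h0mS : frob_semilinear p 0 (h0 ^+ m)%g.
  apply/(frob_semilinearDMf cardF 0 1) => a u v.
  rewrite add0n mul1n -[in (p ^ f)%N]k0m !permX.
  exact: frob_semilinear_iter.
have [mu mu_nz h0mE] : scalar_map (fun v => (h0 ^+ m)%g v).
  by apply: H_scalar; rewrite ?groupX //; apply/frob_semilinear0_linear.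
have {}h0mE v : iter m h0 v = mu *: v by rewrite -permX h0mE.
exists mu; split=> //.
pose w : 'rV[F]_n := const_mx 1.
have h0w_nz : h0 w != 0.
  rewrite -(frob_semilinear0 h0_semilinear) (inj_eq perm_inj).
  by apply/eqP => /matrixP/(_ 0 (Ordinal n_gt0)); rewrite !mxE; apply/eqP/oner_neq0.
move: (iterSr m h0 w); rewrite iterS !h0mE (frob_semilinearZ h0_semilinear) => /eqP.
by rewrite -subr_eq0 -scalerBl scaler_eq0 (negbTE h0w_nz) orbF subr_eq0 => /eqP.
Qed.

Lemma least_twist_normalized :
  exists2 lam : F, lam != 0 & forall v, iter m (fun v => lam *: h0 v) v = v.
Proof.
have [mu [mu_nz mu_fixed h0mE]] := least_twist_power_scalar.
set P := (p ^ k0)%N; have P_gt0 : (0 < P)%N by rewrite expn_gt0 prime_gt0.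
have norm_order : ((\sum_(i < m) P ^ i) * P.-1 = #|F|.-1)%N.
  by rewrite mulnC -predn_exp -expnM k0m cardF.
have mu_unity : mu^-1 ^+ P.-1 = 1.
  rewrite exprVn; apply/eqP; rewrite invr_eq1; apply/eqP/(mulfI mu_nz).
  by rewrite -exprS prednK // mu_fixed mulr1.
have [lam lam_nz lam_norm] := unity_root_expf_onto norm_order mu_unity.
exists lam => // v.
rewrite (iter_frob_semilinear_scale _ h0_semilinear) lam_norm h0mE.
by rewrite scalerA mulVf ?scale1r.
Qed.

Lemma least_twist_conj_phi (B : 'M[F]_n) : B \in unitmx ->
  exists b : {perm 'rV[F]_n},
    linear_map (fun v => b v) /\ scaled_phi_pow p B k0 (fun v => (h0 ^ b)%g v).
Proof.
move=> B_unit; have [lam lam_nz T_order] := least_twist_normalized.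
have [W W_unit TW] := frob_semilinear_fixed_basis p_pr cardF k0_gt0 k0m
  (frob_semilinear_scale lam h0_semilinear) T_order.
have M_unit : invmx W *m B \in unitmx by rewrite unitmx_mul unitmx_inv W_unit.
set b := mulmx_perm M_unit; exists b; split; first exact: linear_mulmx_perm.
exists lam^-1 => [|v]; first by rewrite invr_neq0.
rewrite conjgE !permM -[in RHS](permKV b v); move: ((b^-1)%g v) => u.
have h0E : h0 u = lam^-1 *: (map_mx (fun x => x ^+ (p ^ k0)) (u *m invmx W) *m W).
  by rewrite -TW mulmxKV // scalerA mulVf // scale1r.
rewrite h0E !mulmx_permE (iter_phi_beta _ B_unit) -scalemxAl.
by rewrite !mulmxA !mulmxK.
Qed.

Lemma least_twist_conj_phi_pow (B : 'M[F]_n) : B \in unitmx ->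
  exists b : {perm 'rV[F]_n}, linear_map (fun v => b v) /\
    forall h, h \in H -> exists k, scaled_phi_pow p B k (fun v => (h ^ b)%g v).
Proof.
move=> B_unit; have [b [b_linear h0b]] := least_twist_conj_phi B_unit.
exists b; split=> // h h_in_H.
have [k hS] := semilinear_frob p_pr cardF (H_semilinear h_in_H).
have [_ [c c_nz hE]] := least_twist_decomposition h_in_H hS.
have [d d_nz dE] :=
  scaled_phi_powZ c_nz (scaled_phi_pow_iter p_pr cardF B_unit h0b (k %/ k0)).
by exists (k0 * (k %/ k0))%N, d => // v; rewrite (conjg_scaled_iter b_linear hE) dE.
Qed.

End LeastTwist.

Lemma semilinear_group_conj_phi_pow (B : 'M[F]_n) : B \in unitmx ->
  exists b : {perm 'rV[F]_n}, linear_map (fun v => b v) /\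
    forall h, h \in H -> exists k, scaled_phi_pow p B k (fun v => (h ^ b)%g v).
Proof.
have [k0 [h0 [k0_gt0 h0_in_H h0S k0_least]]] := exists_least_twist.
exact: (least_twist_conj_phi_pow k0_gt0 h0_in_H h0S k0_least).
Qed.

End SemilinearGroup.

Theorem mainTheorem12 (F : finFieldType) (p f n : nat)
  (hp : prime p) (hq : #|F| = (p ^ f)%N) (hn : (2 <= n)%N)
  (hnq : ~ ((n = 2%N /\ #|F| = 2%N) \/ (n = 2%N /\ #|F| = 3%N)))
  (B : 'M[F]_n) (hB : B \in unitmx)
  (H : {group {perm 'rV[F]_n}})
  (hH : forall h, h \in H -> semilinear_map (fun v => h v))
  (hHZ : forall h, h \in H -> linear_map (fun v => h v) -> scalar_map (fun v => h v)) :
  exists b : {perm 'rV[F]_n},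
    linear_map (fun v => b v) /\
    forall h, h \in (H :^ b)%g ->
      exists i : nat, [/\ (1 <= i)%N, (i <= f)%N &
        exists g : 'rV[F]_n -> 'rV[F]_n,
          scalar_map g /\ forall v, h v = g (iter i (phi_beta B p) v)].
Proof.
have [b [b_linear Hb]] := semilinear_group_conj_phi_pow hp hq (ltnW hn) hH hHZ hB.
exists b; split=> // _ /imsetP [h h_in_H ->].
have [k hb] := Hb h h_in_H.
have [i [i_gt0 i_le_f [c c_nz hbE]]] := scaled_phi_pow_reduce hq hB hb.
by exists i; split=> //; exists (fun v => c *: v); split; first by exists c.
Qed.
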